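(* Let $d\in\{1,2,3\}$, $\Omega=\mathbb{T}^d$, $C\ge1$, let $K\subset\mathbb{Z}^d$, and for $k\in K$ let $\Lambda_\theta(k)=\mathrm{diag}(\lambda_{\theta,1}(k),\ldots,\lambda_{\theta,C}(k))$ ($\lambda_{\theta,c}(k)\in\mathbb{C}$), $M_\theta(k)\in\mathbb{C}^{C\times C}$, $F(k)\in[0,1]$; let $\alpha_g,\alpha_w\ge0$, let $G_\theta,W_\theta$ be maps on feature fields and $\sigma$ a pointwise nonlinearity. For $\delta t>0$ define the block map $\Psi_\theta(\cdot;\delta t)$ on $v\in L^2(\Omega;\mathbb{R}^C)$ by: $g=\alpha_gG_\theta(v)$, $$\widehat{v^{\mathrm{etd}}}(k)=\exp(\delta t\Lambda_\theta(k))\hat v(k)+\delta t\,\phi_1(\delta t\Lambda_\theta(k))F(k)M_\theta(k)\hat g(k)\ (k\in K),\quad \widehat{v^{\mathrm{etd}}}(k)=0\ (k\notin K),$$ $\Psi_\theta(v;\delta t)=\sigma(v^{\mathrm{etd}}+\alpha_wW_\theta(v))$. Assume: (1) there is $\omega\le0$ with $\mathrm{Re}(\lambda_{\theta,c}(k))\le\omega$ for all $k\in K$, $c$; (2) for some $R>0$ and $\mathcal{V}_R=\{v:\|v\|_{L^2}\le R\}$, the pointwise maps $\mathrm{Lift}_\theta,\mathrm{Proj}_\theta,G_\theta,W_\theta$ are Lipschitz on $\mathcal{V}_R$ in $L^2$ with constants $L_{\mathrm{lift}},L_{\mathrm{proj}},L_G,L_W$, $\sigma$ is $L_\sigma$-Lipschitz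 on the relevant range, and $\sup_{k\in K}\|M_\theta(k)\|_2\le M$; (3) truncation to $K$ and masking by $F$ do not increase the $L^2$ norm. Let $$q(\delta t)=L_\sigma\Big(e^{\omega\delta t}+\delta t\,\phi_1(\omega\delta t)\,\alpha_gML_G+\alpha_wL_W\Big).$$ Then: (a) if $q(\delta t)\le1$, the block is nonexpansive on $\mathcal{V}_R$: $\|\Psi_\theta(v;\delta t)-\Psi_\theta(w;\delta t)\|_{L^2}\le\|v-w\|_{L^2}$ for $v,w\in\mathcal{V}_R$; (b) for a fixed $\Delta t_{\mathrm{data}}>0$, an integer $L\ge1$ and $\delta t=\Delta t_{\mathrm{data}}/L$, for all $v,w$ such that $\Psi_\theta^j(v),\Psi_\theta^j(w)\in\mathcal{V}_R$ for $j=0,\ldots,L-1$ (with $\Psi_\theta=\Psi_\theta(\cdot;\delta t)$), $$\|(\Psi_\theta)^L(v)-(\Psi_\theta)^L(w)\|_{L^2}\le q(\Delta t_{\mathrm{data}}/L)^L\|v-w\|_{L^2};$$ (c) with all other quantities fixed, decreasing $\alpha_g$ or decreasing $\alpha_w$ reduces $q(\delta t)$ (does not increase it, and strictly decreases it whenever the corresponding coefficient $L_\sigma\delta t\,\phi_1(\omega\delta t)ML_G$, resp. $L_\sigma L_W$, is positive).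
   Context: $\phi_1(z)=(e^z-1)/z$, $\phi_1(0)=1$, applied entrywise to diagonal matrices. The Fourier transform is normalized so that Parseval's identity holds. $\mathrm{Lift}_\theta,\mathrm{Proj}_\theta,G_\theta,W_\theta,\sigma$ act pointwise in space; Lipschitz constants of $\sigma$ are with respect to the Euclidean norm on channel vectors. $\|\cdot\|_2$ is the matrix spectral norm. $(\Psi_\theta)^L$ denotes the $L$-fold composition. *)

From HB Require Import structures.
From mathcomp Require Import all_boot all_order all_algebra.
From mathcomp Require Import all_classical all_reals.
From mathcomp Require Import topology normedtype sequences esum exp trigo.
From mathcomp Require Import complex.
Set Implicit Arguments. Unset Strict Implicit. Unset Printing Implicit Defensive.
Import Order.TTheory GRing.Theory Num.Theory.
Local Open Scope ring_scope.
Local Open Scope classical_set_scope.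
Local Open Scope complex_scope.

Section Defs.
Variable R : realType.

Definition cexp (z : R[i]) : R[i] :=
  let: a +i* b := z in (expR a * cos b) +i* (expR a * sin b).

Definition phi1 (z : R[i]) : R[i] := if z == 0 then 1 else (cexp z - 1) / z.
Definition phi1R (x : R) : R := if x == 0 then 1 else (expR x - 1) / x.

Definition cabs2 (z : R[i]) : R := let: a +i* b := z in a ^+ 2 + b ^+ 2.

Variables (d nC : nat).

Definition wavevec := 'rV[int]_d.

(* a feature field v in L^2(T^d; C^nC), given by its Fourier coefficients
   \hat v : Z^d -> C^nC (unitary normalization, Parseval holds) *)
Definition field := wavevec -> 'cV[R[i]]_nC.

Definition vnorm2 (x : 'cV[R[i]]_nC) : R := \sum_(c < nC) cabs2 (x c 0).
Definition vnorm (x : 'cV[R[i]]_nC) : R := Num.sqrt (vnorm2 x).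

Definition specnorm_le (A : 'M[R[i]]_nC) (m : R) : Prop :=
  forall x : 'cV[R[i]]_nC, vnorm (A *m x) <= m * vnorm x.

(* L^2 norm via Parseval: ||v||^2 = sum_k |\hat v(k)|^2 (possibly +oo) *)
Definition l2sq (v : field) : \bar R := \esum_(k in [set: wavevec]) (vnorm2 (v k))%:E.
Definition esqrt (x : \bar R) : \bar R :=
  match x with EFin r => (Num.sqrt r)%:E | +oo%E => +oo%E | -oo%E => 0%E end.
Definition l2norm (v : field) : \bar R := esqrt (l2sq v).

Definition fsub (v w : field) : field := fun k => v k - w k.

Definition ballR (Rad : R) : set field := [set v | (l2norm v <= Rad%:E)%E].

Definition l2_lipschitz_on (A : set field) (f : field -> field) (L : R) : Prop :=
  forall v w, A v -> A w -> (l2norm (fsub (f v) (f w)) <= L%:E * l2norm (fsub v w))%E.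

Definition etd (K : set wavevec) (lam : wavevec -> 'I_nC -> R[i])
  (Mt : wavevec -> 'M[R[i]]_nC) (F : wavevec -> R) (ag : R)
  (G : field -> field) (dt : R) (v : field) : field :=
  fun k => if `[< K k >] then
     (\col_c (cexp (dt%:C * lam k c) * v k c 0))
     + dt%:C *: (diag_mx (\row_c phi1 (dt%:C * lam k c))) *m
         ((F k)%:C *: (Mt k *m (ag%:C *: G v k)))
   else 0.

Definition preact K lam Mt F ag aw G (W : field -> field) dt (v : field) : field :=
  fun k => etd K lam Mt F ag G dt v k + aw%:C *: W v k.

Definition Psi K lam Mt F ag aw G W (sig : field -> field) dt (v : field) : field :=
  sig (preact K lam Mt F ag aw G W dt v).

(* the relevant range of pre-activations on which sigma acts: all
   pre-activation fields produced from some v in V_R and some dt > 0 *)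
Definition preact_range K lam Mt F ag aw G W (Rad : R) : set field :=
  [set u | exists dt v, 0 < dt /\ ballR Rad v /\ u = preact K lam Mt F ag aw G W dt v].

Definition qfac (Ls Lg Lw M ag aw om dt : R) : R :=
  Ls * (expR (om * dt) + dt * phi1R (om * dt) * ag * M * Lg + aw * Lw).

End Defs.

(* For each Fourier mode in K the ETD update acts channelwise.  The
   exponential factor has modulus exp (dt Re lam) <= exp (om dt), and
   |phi1 (a + i b)| <= phi1 a <= phi1 (om dt) for a <= om dt <= 0: the first
   inequality reduces to 1 - cos b <= b^2/2 and a^2 e^a <= (1 - e^a)^2, the
   second is the monotonicity of the chord slope (e^a - 1)/a.  With
   0 <= F <= 1 and ||M_k||_2 <= M this bounds the pre-activation difference
   mode by mode by e^(om dt)|v - w| + dt phi1(om dt) ag M |Gv - Gw| + aw |Wv - Ww|,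
   and Minkowski's inequality in l^2(Z^d) (Parseval) together with the
   Lipschitz bounds on G, W and sigma gives the factor q(dt).  Part (b) follows
   by iterating along orbits that stay in V_R, and part (c) because q is
   affine in ag and aw with the stated slopes.
   Both triangle inequalities, for channel vectors and for the possibly
   infinite l^2 sums, come from the weighted bound
   (p + q)^2 <= (P + Q) (p^2/P + q^2/Q), optimised over P, Q > 0. *)

From HB Require Import structures.
From mathcomp Require Import all_boot all_order all_algebra.
From mathcomp Require Import all_classical all_reals.
From mathcomp Require Import topology normedtype sequences esum exp trigo.
From mathcomp Require Import complex.
From mathcomp Require Import ereal derive.
From mathcomp Require Import ring lra.
Set Implicit Arguments. Unset Strict Implicit. Unset Printing Implicit Defensive.
Import Order.TTheory GRing.Theory Num.Theory.
Import numFieldNormedType.Exports.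
Local Open Scope ring_scope.
Local Open Scope classical_set_scope.
Local Open Scope complex_scope.

Lemma sqrD_le_weighted (R : realFieldType) (p q P Q : R) : 0 < P -> 0 < Q ->
  (p + q) ^+ 2 <= (P + Q) * (p ^+ 2 / P + q ^+ 2 / Q).
Proof.
move=> P0 Q0.
have -> : (P + Q) * (p ^+ 2 / P + q ^+ 2 / Q) =
    (p + q) ^+ 2 + (p * Q - q * P) ^+ 2 / (P * Q).
  by field; rewrite !gt_eqF.
by rewrite lerDl divr_ge0 ?sqr_ge0 // mulr_ge0 // ltW.
Qed.

Lemma mulr_weightedE (R : fieldType) (P Q X Y : R) :
  (P + Q) * (X / P + Y / Q) = (P + Q) / P * X + (P + Q) / Q * Y.
Proof. by rewrite mulrDr !mulrA [_ * X / P]mulrAC [_ * Y / Q]mulrAC. Qed.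

Lemma sqrt_le_sqrtD_weighted (R : rcfType) (H X Y : R) : 0 <= X -> 0 <= Y ->
  (forall P Q, 0 < P -> 0 < Q -> H <= (P + Q) * (X / P + Y / Q)) ->
  Num.sqrt H <= Num.sqrt X + Num.sqrt Y.
Proof.
move=> X0 Y0 HXY; set s := Num.sqrt X; set t := Num.sqrt Y.
have s0 : 0 <= s by exact: sqrtr_ge0.
have t0 : 0 <= t by exact: sqrtr_ge0.
suff H_le : H <= (s + t) ^+ 2.
  by rewrite -(ger0_norm (addr_ge0 s0 t0)) -sqrtr_sqr ler_wsqrtr.
(* The weights [P = s + e], [Q = t + e] approach the optimal ones [P = s], [Q = t]. *)
apply/ler_addgt0Pr => eps eps0.
pose e := eps / (2 * (s + t) + 1).
have e0 : 0 < e by rewrite divr_gt0 // ltr_wpDl // mulr_ge0 // addr_ge0.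
have eps_e : eps = e * (2 * (s + t) + 1).
  by rewrite divfK // gt_eqF // ltr_wpDl // mulr_ge0 // addr_ge0.
have Xs : X / (s + e) <= s.
  by rewrite ler_pdivrMr ?ltr_wpDl // -(sqr_sqrtr X0) -/s; nra.
have Yt : Y / (t + e) <= t.
  by rewrite ler_pdivrMr ?ltr_wpDl // -(sqr_sqrtr Y0) -/t; nra.
have := HXY _ _ (ltr_wpDl s0 e0) (ltr_wpDl t0 e0).
move/le_trans; apply.
have : (s + e + (t + e)) * (X / (s + e) + Y / (t + e)) <= (s + e + (t + e)) * (s + t).
  by rewrite ler_wpM2l ?lerD // addr_ge0 // addr_ge0 // ltW.
move/le_trans; apply; rewrite eps_e; nra.
Qed.

Section RealBounds.
Variable R : realType.

Lemma sin_le_id (y : R) : 0 <= y -> sin y <= y.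
Proof.
move=> y0; pose g : R -> R := id - sin.
have dg x : is_derive x (1 : R) g (1 - cos x) by apply: trigger_derive.
have cg : continuous g.
  by move=> x; apply: continuousB; [exact: cvg_id | exact: continuous_sin].
have [->|yn0] := eqVneq y 0; first by rewrite sin0.
have y_gt0 : 0 < y by rewrite lt_def yn0.
have [c _ gyB] := MVT y_gt0 (fun x _ => dg x) (continuous_subspaceT cg).
have : 0 <= g y - g 0 by rewrite gyB mulr_ge0 ?subr_ge0 ?cos_le1 // subr0 ltW.
have -> : g y - g 0 = y - sin y.
  by rewrite /g; change (y - sin y - (0 - sin 0) = y - sin y); rewrite sin0 !subr0.
by rewrite subr_ge0.
Qed.

Lemma sqr_sin_le (y : R) : sin y ^+ 2 <= y ^+ 2.
Proof.
wlog y0 : y / 0 <= y.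
  move=> hw; have [/hw //|y_lt0] := lerP 0 y.
  by rewrite -sqrrN -sinN -[y ^+ 2]sqrrN hw // oppr_ge0 ltW.
suff : - y <= sin y by have := sin_le_id y0; nra.
have [y1|] := lerP y 1; last by have := sin_geN1 y; lra.
have pi2 := @pi_ge2 R.
have : 0 <= sin y by apply: sin_ge0_pi; apply/andP; split => //; lra.
lra.
Qed.

Lemma one_minus_cos_le (b : R) : 2 * (1 - cos b) <= b ^+ 2.
Proof.
have -> : b = (b / 2) *+ 2 by rewrite mulr2n -splitr.
rewrite cos_mulr2n cos2sin2.
have := sqr_sin_le (b / 2); move: (sin (b / 2)) => s.
rewrite !mulr2n; lra.
Qed.

Lemma expRBexpRN_ge2x (t : R) : 0 <= t -> 2 * t <= expR t - expR (- t).
Proof.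
move=> t0; pose g : R -> R := expR - (expR \o -%R) - (cst 2 * id).
have dg x : is_derive x (1 : R) g (expR x + expR (- x) - 2).
  apply: trigger_derive; rewrite /= scaler0 addr0 mulrN1 opprK.
  by congr (_ - _); exact: mulr1.
have cg : continuous g.
  move=> x; apply/differentiable_continuous/derivable1_diffP.
  exact: (@ex_derive _ _ _ _ _ _ _ (dg x)).
have [->|tn0] := eqVneq t 0; first by rewrite oppr0 subrr mulr0.
have t_gt0 : 0 < t by rewrite lt_def tn0.
have [c _ gtB] := MVT t_gt0 (fun x _ => dg x) (continuous_subspaceT cg).
have : 0 <= g t - g 0.
  have : 0 <= expR c + expR (- c) - 2.
    by have := expR_ge1Dx c; have := expR_ge1Dx (- c); lra.
  by rewrite gtB => /mulr_ge0; apply; rewrite subr0 ltW.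
have -> : g t - g 0 = expR t - expR (- t) - 2 * t.
  rewrite /g; change (expR t - expR (- t) - 2 * t - (expR 0 - expR (- 0) - 2 * 0)
    = expR t - expR (- t) - 2 * t).
  by rewrite oppr0 subrr mulr0 !subr0.
by rewrite subr_ge0.
Qed.

Lemma sqr_mul_expR_le (a : R) : a <= 0 -> a ^+ 2 * expR a <= (1 - expR a) ^+ 2.
Proof.
move=> a0; set u := expR (a / 2).
have u0 : 0 < u := expR_gt0 _.
have uu : expR a = u ^+ 2 by rewrite expr2 -expRD -splitr.
have au : - a * u <= 1 - u ^+ 2.
  have a2 : 0 <= - (a / 2) by rewrite oppr_ge0; lra.
  have := expRBexpRN_ge2x a2; rewrite opprK expRN -/u.
  move=> /(ler_wpM2r (ltW u0)); rewrite mulrBl mulVf ?gt_eqF // -expr2.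
  by have -> : 2 * - (a / 2) * u = - a * u by field.
have : 0 <= - a * u by rewrite mulr_ge0 // ?oppr_ge0 // ltW.
by rewrite uu; nra.
Qed.

Lemma phi1R_neq0 (x : R) : x != 0 -> phi1R x = (expR x - 1) / x.
Proof. by rewrite /phi1R => /negPf ->. Qed.

Lemma phi1R_ge0 (x : R) : 0 <= phi1R x.
Proof.
have [->|xn0] := eqVneq x 0; first by rewrite /phi1R eqxx.
rewrite phi1R_neq0 //; have [x_lt0|x_gt0|x_eq0] := ltgtP x 0.
- by rewrite ler_ndivlMr // mul0r subr_le0 expR_le1 ltW.
- by rewrite divr_ge0 ?(ltW x_gt0) // subr_ge0; have := expR_ge1Dx x; lra.
- by rewrite x_eq0 eqxx in xn0.
Qed.

Lemma phi1R_le (a x : R) : a <= x -> x <= 0 -> phi1R a <= phi1R x.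
Proof.
move=> ax x0; have [-> //|anx] := eqVneq a x.
have a_lt_x : a < x by rewrite lt_def eq_sym anx.
have a_lt0 : a < 0 := lt_le_trans a_lt_x x0.
rewrite phi1R_neq0 ?lt_eqF //.
have [->|xn0] := eqVneq x 0.
  by rewrite /phi1R eqxx ler_ndivrMr // mul1r; have := expR_ge1Dx a; lra.
have x_lt0 : x < 0 by rewrite lt_neqAle xn0.
rewrite phi1R_neq0 //; set A := expR a; set X := expR x.
have XA : X * (1 + (a - x)) <= A.
  have -> : A = X * expR (a - x) by rewrite -expRD addrC subrK.
  by apply: ler_wpM2l; [exact: expR_ge0 | exact: expR_ge1Dx].
have X1 : X * (1 - x) <= 1.
  have XXN : X * expR (- x) = 1 by rewrite -expRD subrr expR0.
  rewrite -[leRHS]XXN.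
  by apply: ler_wpM2l; [exact: expR_ge0 | exact: expR_ge1Dx].
(* The numerator is [<= 0] by the tangent-line bounds [XA] and [X1]. *)
have -> : (A - 1) / a = (X - 1) / x + (x * (A - 1) - a * (X - 1)) / (a * x).
  by field; rewrite xn0 lt_eqF.
rewrite gerDl mulr_le0_ge0 ?invr_ge0 //; last by nra.
have : x * A <= x * (X * (1 + (a - x))) by rewrite ler_wnM2l // ltW.
have : (a - x) * 1 <= (a - x) * (X * (1 - x)) by rewrite ler_wnM2l // subr_le0 ltW.
nra.
Qed.

End RealBounds.

Section ComplexModulus.
Variable R : realType.
Implicit Types (z w : R[i]) (a b : R).

Lemma cabs2_ge0 z : 0 <= cabs2 z.
Proof. by case: z => a b; rewrite addr_ge0 ?sqr_ge0. Qed.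

Lemma cabs2M z w : cabs2 (z * w) = cabs2 z * cabs2 w.
Proof. by case: z => a b; case: w => c e; rewrite /cabs2 /=; ring. Qed.

Lemma cabs2V z : cabs2 z^-1 = (cabs2 z)^-1.
Proof.
case: z => a b; rewrite /cabs2 /=.
have [N0|Nn0] := eqVneq (a ^+ 2 + b ^+ 2) 0.
  by rewrite N0 invr0 !mulr0 oppr0 expr0n addr0.
by field.
Qed.

Lemma cabs2_real a : cabs2 a%:C = a ^+ 2.
Proof. by rewrite /cabs2 /= expr0n addr0. Qed.

Lemma cabs2D_le_weighted z w P Q : 0 < P -> 0 < Q ->
  cabs2 (z + w) <= (P + Q) * (cabs2 z / P + cabs2 w / Q).
Proof.
move=> P0 Q0; case: z => a b; case: w => c e; rewrite /cabs2 /=.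
have -> : (P + Q) * ((a ^+ 2 + b ^+ 2) / P + (c ^+ 2 + e ^+ 2) / Q) =
  (P + Q) * (a ^+ 2 / P + c ^+ 2 / Q) + (P + Q) * (b ^+ 2 / P + e ^+ 2 / Q).
  by rewrite !mulrDl; ring.
by rewrite lerD // sqrD_le_weighted.
Qed.

Lemma Re_realM a z : complex.Re (a%:C * z) = a * complex.Re z.
Proof. by case: z => b c /=; rewrite mul0r subr0. Qed.

Lemma cabs2_cexp z : cabs2 (cexp z) = expR (complex.Re z) ^+ 2.
Proof.
case: z => a b; rewrite /cabs2 /= !exprMn -mulrDr.
by rewrite cos2Dsin2 mulr1.
Qed.

Lemma cabs2_cexpB1 a b :
  cabs2 (cexp (a +i* b) - 1) = (expR a - 1) ^+ 2 + 2 * expR a * (1 - cos b).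
Proof.
rewrite /cabs2 /= subr0; have := cos2Dsin2 b.
move: (expR a) (cos b) (sin b) => E C S CS.
have -> : (E * C - 1) ^+ 2 + (E * S) ^+ 2 = E ^+ 2 * (C ^+ 2 + S ^+ 2) - 2 * E * C + 1.
  by ring.
by rewrite CS; ring.
Qed.

Lemma cabs2_phi1_le z : complex.Re z <= 0 -> cabs2 (phi1 z) <= phi1R (complex.Re z) ^+ 2.
Proof.
case: z => a b /= a0; rewrite /phi1.
have [z0|zn0] := eqVneq (a +i* b) 0.
  by case: z0 => -> _; rewrite /phi1R eqxx /cabs2 /=; lra.
rewrite cabs2M cabs2V cabs2_cexpB1.
have N0 : 0 < cabs2 (a +i* b).
  rewrite lt_def cabs2_ge0 andbT; apply: contra zn0.
  by rewrite paddr_eq0 ?sqr_ge0 // !sqrf_eq0 => /andP[/eqP-> /eqP->].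
rewrite -/(_ / _) ler_pdivrMr //; rewrite /cabs2 in N0 *.
have hc := one_minus_cos_le b; have E0 := expR_gt0 a.
have [a_lt0|a_gt0|->] := ltgtP a 0; last 2 first.
- by rewrite ltNge a0 in a_gt0.
- by move: hc; rewrite /phi1R eqxx expR0 subrr !expr1n !expr0n /=; lra.
have a2 : 0 < a ^+ 2 by rewrite exprn_even_gt0 //= ltr0_neq0.
rewrite phi1R_neq0 ?lt_eqF // expr_div_n [leRHS]mulrAC ler_pdivlMr //.
(* With [E = expR a]: [2 E (1 - cos b) a^2 <= E a^2 b^2 <= (1 - E)^2 b^2]. *)
have := ler_wpM2r (ltW (mulr_gt0 E0 a2)) hc.
have := ler_wpM2l (sqr_ge0 b) (sqr_mul_expR_le (ltW a_lt0)).
nra.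
Qed.

Lemma cabs2_phi1_le_phi1R z x : complex.Re z <= x -> x <= 0 ->
  cabs2 (phi1 z) <= phi1R x ^+ 2.
Proof.
move=> zx x0; apply: (le_trans (cabs2_phi1_le (le_trans zx x0))).
by rewrite ler_sqr ?nnegrE ?phi1R_ge0 ?phi1R_le.
Qed.

End ComplexModulus.

Section ChannelNorm.
Variables (R : realType) (n : nat).
Implicit Types x y : 'cV[R[i]]_n.

Lemma vnorm2_ge0 x : 0 <= vnorm2 x.
Proof. by rewrite sumr_ge0 // => c _; exact: cabs2_ge0. Qed.

Lemma vnorm_ge0 x : 0 <= vnorm x.
Proof. exact: sqrtr_ge0. Qed.

Lemma vnorm0 : vnorm (0 : 'cV[R[i]]_n) = 0.
Proof.
by rewrite /vnorm /vnorm2 big1 ?sqrtr0 // => c _; rewrite mxE /cabs2 /= expr0n addr0.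
Qed.

Lemma vnorm2D_le_weighted x y P Q : 0 < P -> 0 < Q ->
  vnorm2 (x + y) <= (P + Q) * (vnorm2 x / P + vnorm2 y / Q).
Proof.
move=> P0 Q0; rewrite /vnorm2 !mulr_suml -big_split mulr_sumr /=.
by apply: ler_sum => c _; rewrite mxE cabs2D_le_weighted.
Qed.

Lemma vnormD x y : vnorm (x + y) <= vnorm x + vnorm y.
Proof.
apply: sqrt_le_sqrtD_weighted; rewrite ?vnorm2_ge0 //.
exact: vnorm2D_le_weighted.
Qed.

Lemma vnorm_col_le (u : 'I_n -> R[i]) x m : 0 <= m ->
  (forall c, cabs2 (u c) <= m ^+ 2) -> vnorm (\col_c (u c * x c 0)) <= m * vnorm x.
Proof.
move=> m0 um; rewrite /vnorm -(ger0_norm m0) -sqrtr_sqr -sqrtrM ?sqr_ge0 //.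
rewrite ler_wsqrtr // /vnorm2 mulr_sumr; apply: ler_sum => c _.
by rewrite mxE cabs2M ler_wpM2r ?cabs2_ge0.
Qed.

Lemma vnormZ_le (s : R) x : 0 <= s -> vnorm (s%:C *: x) <= s * vnorm x.
Proof.
move=> s0; have -> : s%:C *: x = \col_c (s%:C * x c 0).
  by apply/matrixP => i j; rewrite !mxE (ord1 j).
by apply: vnorm_col_le => // c; rewrite cabs2_real.
Qed.

Lemma vnorm_diag_le (u : 'I_n -> R[i]) x m : 0 <= m ->
  (forall c, cabs2 (u c) <= m ^+ 2) -> vnorm (diag_mx (\row_c u c) *m x) <= m * vnorm x.
Proof.
have -> : diag_mx (\row_c u c) *m x = \col_c (u c * x c 0).
  by apply/matrixP => i j; rewrite mul_diag_mx !mxE (ord1 j).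
exact: vnorm_col_le.
Qed.

End ChannelNorm.

Section L2Norm.
Variables (R : realType) (T : choiceType).
Local Open Scope ereal_scope.
Implicit Types (f g h : T -> R).

Lemma esqrt_ge0 (x : \bar R) : 0 <= esqrt x.
Proof. by case: x => [r| |] //=; rewrite ?leey // lee_fin sqrtr_ge0. Qed.

Lemma esqrt_le (x y : \bar R) : 0 <= x -> x <= y -> esqrt x <= esqrt y.
Proof.
case: x => [r| |] //; case: y => [s| |] //= r0 rs; rewrite ?leey //.
by rewrite lee_fin in rs *; exact: ler_wsqrtr.
Qed.

Lemma esqrt_sqrM (c : R) (x : \bar R) : (0 <= c)%R -> 0 <= x ->
  esqrt ((c ^+ 2)%:E * x) = c%:E * esqrt x.
Proof.
move=> c0; case: x => [r| |] //= r0.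
  by rewrite sqrtrM ?sqr_ge0 // sqrtr_sqr ger0_norm.
have [->|cn0] := eqVneq c 0%R; first by rewrite expr0n !mul0e /= sqrtr0.
by rewrite !gt0_muley ?lte_fin ?exprn_gt0 // lt_def cn0.
Qed.

Lemma esum_EFin_ge0 f : (forall k, 0 <= f k)%R -> 0 <= \esum_(k in [set: T]) (f k)%:E.
Proof. by move=> f0; apply: esum_ge0 => k _; rewrite lee_fin. Qed.

Lemma esum_scale_le (c : R) f : (0 <= c)%R -> (forall k, 0 <= f k)%R ->
  \esum_(k in [set: T]) (c * f k)%:E <= c%:E * \esum_(k in [set: T]) (f k)%:E.
Proof.
move=> c0 f0; apply: ge_ereal_sup => _ [X [finX _] <-] /=.
have -> : \sum_(i \in X) (c * f i)%:E = c%:E * \sum_(i \in X) (f i)%:E.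
  by rewrite ge0_mule_fsumr // => i; rewrite lee_fin.
by rewrite lee_wpmul2l ?lee_fin //; apply: ereal_sup_ubound; exists X.
Qed.

Lemma esqrt_esum_scale_le (c : R) f : (0 <= c)%R -> (forall k, 0 <= f k)%R ->
  esqrt (\esum_(k in [set: T]) (c ^+ 2 * f k)%:E) <=
  c%:E * esqrt (\esum_(k in [set: T]) (f k)%:E).
Proof.
move=> c0 f0; rewrite -esqrt_sqrM ?esum_EFin_ge0 //.
apply: esqrt_le; last exact: esum_scale_le (sqr_ge0 c) f0.
by apply: esum_EFin_ge0 => k; rewrite mulr_ge0 ?sqr_ge0.
Qed.

Lemma esum_le_weighted h f g (P Q : R) : (0 < P)%R -> (0 < Q)%R ->
  (forall k, 0 <= f k)%R -> (forall k, 0 <= g k)%R ->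
  (forall k, h k <= (P + Q) * (f k / P + g k / Q))%R ->
  \esum_(k in [set: T]) (h k)%:E <=
  ((P + Q) / P)%:E * (\esum_(k in [set: T]) (f k)%:E) +
  ((P + Q) / Q)%:E * (\esum_(k in [set: T]) (g k)%:E).
Proof.
move=> P0 Q0 f0 g0 hfg.
have cP : (0 <= (P + Q) / P)%R by rewrite divr_ge0 // ltW // addr_gt0.
have cQ : (0 <= (P + Q) / Q)%R by rewrite divr_ge0 // ltW // addr_gt0.
apply: le_trans (leeD (esum_scale_le cP f0) (esum_scale_le cQ g0)).
rewrite -esumD => [|k _|k _]; try by rewrite lee_fin mulr_ge0.
by apply: le_esum => k _; rewrite -EFinD lee_fin -mulr_weightedE hfg.
Qed.

Lemma esqrt_esum_le_sqrtD h f g :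
  (forall k, 0 <= h k)%R -> (forall k, 0 <= f k)%R -> (forall k, 0 <= g k)%R ->
  (forall k, Num.sqrt (h k) <= Num.sqrt (f k) + Num.sqrt (g k))%R ->
  esqrt (\esum_(k in [set: T]) (h k)%:E) <=
  esqrt (\esum_(k in [set: T]) (f k)%:E) + esqrt (\esum_(k in [set: T]) (g k)%:E).
Proof.
move=> h0 f0 g0 hfg.
have pointwise (P Q : R) : (0 < P)%R -> (0 < Q)%R ->
    forall k, (h k <= (P + Q) * (f k / P + g k / Q))%R.
  move=> P0 Q0 k; have := sqrD_le_weighted (Num.sqrt (f k)) (Num.sqrt (g k)) P0 Q0.
  rewrite !sqr_sqrtr //; apply: le_trans.
  by rewrite -[h k](sqr_sqrtr (h0 k)) ler_sqr ?nnegrE ?addr_ge0 ?sqrtr_ge0.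
have weighted P Q P0 Q0 := esum_le_weighted P0 Q0 f0 g0 (pointwise P Q P0 Q0).
move: weighted (esum_EFin_ge0 h0) (esum_EFin_ge0 f0) (esum_EFin_ge0 g0).
case: (\esum_(k in [set: T]) (h k)%:E) => [H| |];
  case: (\esum_(k in [set: T]) (f k)%:E) => [X| |];
  case: (\esum_(k in [set: T]) (g k)%:E) => [Y| |] //= w H0 X0 Y0; rewrite ?leey //.
  rewrite !lee_fin in H0 X0 Y0 *; apply: sqrt_le_sqrtD_weighted => // P Q P0 Q0.
  by have := w P Q P0 Q0; rewrite -!EFinM -EFinD lee_fin mulr_weightedE.
by have := w 1%R 1%R ltr01 ltr01; rewrite -!EFinM -EFinD leye_eq.
Qed.

Lemma esqrt_esum_le_combination (a b c : R) h f g u :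
  (0 <= a)%R -> (0 <= b)%R -> (0 <= c)%R ->
  (forall k, 0 <= h k)%R -> (forall k, 0 <= f k)%R ->
  (forall k, 0 <= g k)%R -> (forall k, 0 <= u k)%R ->
  (forall k, Num.sqrt (h k) <=
     a * Num.sqrt (f k) + b * Num.sqrt (g k) + c * Num.sqrt (u k))%R ->
  esqrt (\esum_(k in [set: T]) (h k)%:E) <=
  a%:E * esqrt (\esum_(k in [set: T]) (f k)%:E) +
  b%:E * esqrt (\esum_(k in [set: T]) (g k)%:E) +
  c%:E * esqrt (\esum_(k in [set: T]) (u k)%:E).
Proof.
move=> a0 b0 c0 h0 f0 g0 u0 hfgu.
have sqrt_sqrM (e : R) (x : T -> R) k : (0 <= e)%R ->
    Num.sqrt (e ^+ 2 * x k) = (e * Num.sqrt (x k))%R.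
  by move=> e0; rewrite sqrtrM ?sqr_ge0 // sqrtr_sqr ger0_norm.
pose gu k := ((b * Num.sqrt (g k) + c * Num.sqrt (u k)) ^+ 2)%R.
have gu0 k : (0 <= gu k)%R by exact: sqr_ge0.
have sqrt_gu k : Num.sqrt (gu k) = (b * Num.sqrt (g k) + c * Num.sqrt (u k))%R.
  by rewrite sqrtr_sqr ger0_norm // addr_ge0 // mulr_ge0 // sqrtr_ge0.
have f2 k : (0 <= a ^+ 2 * f k)%R by rewrite mulr_ge0 ?sqr_ge0.
have g2 k : (0 <= b ^+ 2 * g k)%R by rewrite mulr_ge0 ?sqr_ge0.
have u2 k : (0 <= c ^+ 2 * u k)%R by rewrite mulr_ge0 ?sqr_ge0.
apply: le_trans (esqrt_esum_le_sqrtD h0 f2 gu0 _) _.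
  by move=> k; rewrite sqrt_sqrM // sqrt_gu addrA.
rewrite -addeA; apply: leeD; first exact: esqrt_esum_scale_le.
apply: le_trans (esqrt_esum_le_sqrtD gu0 g2 u2 _) _.
  by move=> k; rewrite sqrt_gu !sqrt_sqrM.
by apply: leeD; exact: esqrt_esum_scale_le.
Qed.

End L2Norm.

Lemma iter_lipschitz_on (R : realType) (X : Type) (dist : X -> X -> \bar R)
    (A : set X) (f : X -> X) (q : R) (L : nat) (v w : X) : 0 <= q ->
  (forall v w, A v -> A w -> (dist (f v) (f w) <= q%:E * dist v w)%E) ->
  (forall j, (j < L)%N -> A (iter j f v) /\ A (iter j f w)) ->
  (dist (iter L f v) (iter L f w) <= (q ^+ L)%:E * dist v w)%E.
Proof.
move=> q0 f_lip; elim: L => [|L IH] orbit; first by rewrite expr0 mul1e.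
have [Av Aw] := orbit L (ltnSn L).
rewrite !iterS exprS EFinM -muleA; apply: le_trans (f_lip _ _ Av Aw) _.
rewrite lee_wpmul2l ?lee_fin // IH // => j jL.
by apply: orbit; rewrite ltnS ltnW.
Qed.

Section Block.
Variables (R : realType) (d nC : nat).
Local Notation fld := (field R d nC).
Variables (K : set (wavevec d)) (lam : wavevec d -> 'I_nC -> R[i])
  (Mt : wavevec d -> 'M[R[i]]_nC) (F : wavevec d -> R) (ag aw om M : R)
  (G W : fld -> fld).
Hypotheses (F01 : forall k, K k -> 0 <= F k <= 1) (ag0 : 0 <= ag) (aw0 : 0 <= aw)
  (lam_om : forall k c, K k -> complex.Re (lam k c) <= om) (om0 : om <= 0)
  (M0 : 0 <= M) (Mt_M : forall k, K k -> specnorm_le (Mt k) M).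
Variable dt : R.
Hypothesis dt0 : 0 < dt.

Let Re_dt_lam_le k c : K k -> complex.Re (dt%:C * lam k c) <= om * dt.
Proof. by move=> Kk; rewrite Re_realM mulrC ler_wpM2r ?lam_om // ltW. Qed.

Lemma vnorm_cexp_col_le k (x : 'cV[R[i]]_nC) : K k ->
  vnorm (\col_c (cexp (dt%:C * lam k c) * x c 0)) <= expR (om * dt) * vnorm x.
Proof.
move=> Kk; apply: vnorm_col_le => [|c]; first exact: expR_ge0.
rewrite cabs2_cexp ler_sqr ?nnegrE ?expR_ge0 // ler_expR.
exact: Re_dt_lam_le.
Qed.

Lemma vnorm_forcing_le k (y : 'cV[R[i]]_nC) : K k ->
  vnorm (dt%:C *: diag_mx (\row_c phi1 (dt%:C * lam k c)) *m
           ((F k)%:C *: (Mt k *m (ag%:C *: y))))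
  <= dt * phi1R (om * dt) * ag * M * vnorm y.
Proof.
move=> Kk; have [F0 F1] := andP (F01 Kk).
have omdt0 : om * dt <= 0 by rewrite mulr_le0_ge0 // ltW.
rewrite -scalemxAl; apply: le_trans (vnormZ_le _ (ltW dt0)) _.
rewrite -!mulrA ler_wpM2l ?(ltW dt0) //.
apply: le_trans (vnorm_diag_le _ (phi1R_ge0 (om * dt)) _) _.
  by move=> c; apply: cabs2_phi1_le_phi1R => //; exact: Re_dt_lam_le.
rewrite ler_wpM2l ?phi1R_ge0 //.
apply: le_trans (vnormZ_le _ F0) _.
have MtZ : vnorm (Mt k *m (ag%:C *: y)) <= ag * (M * vnorm y).
  apply: le_trans (Mt_M Kk _) _; rewrite mulrCA ler_wpM2l //.
  exact: vnormZ_le.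
by apply: le_trans MtZ; rewrite ler_piMl ?vnorm_ge0.
Qed.

Lemma etd_sub k (v w : fld) : K k ->
  etd K lam Mt F ag G dt v k - etd K lam Mt F ag G dt w k =
  \col_c (cexp (dt%:C * lam k c) * (v k - w k) c 0) +
  dt%:C *: diag_mx (\row_c phi1 (dt%:C * lam k c)) *m
    ((F k)%:C *: (Mt k *m (ag%:C *: (G v k - G w k)))).
Proof.
move=> Kk; rewrite /etd asboolT // opprD addrACA; congr (_ + _).
  by apply/matrixP => i j; rewrite !mxE mulrBr.
by rewrite !(scalerBr, mulmxBr).
Qed.

Lemma vnorm_preact_sub_le (v w : fld) k :
  vnorm (fsub (preact K lam Mt F ag aw G W dt v) (preact K lam Mt F ag aw G W dt w) k)
  <= expR (om * dt) * vnorm (fsub v w k)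
     + dt * phi1R (om * dt) * ag * M * vnorm (fsub (G v) (G w) k)
     + aw * vnorm (fsub (W v) (W w) k).
Proof.
rewrite /fsub /preact opprD addrACA -scalerBr.
apply: le_trans (vnormD _ _) _; rewrite lerD ?vnormZ_le //.
have [Kk|nKk] := pselect (K k); last first.
  rewrite /etd asboolF // subrr vnorm0.
  by rewrite addr_ge0 // mulr_ge0 ?vnorm_ge0 ?expR_ge0 // !mulr_ge0 ?phi1R_ge0 // ltW.
rewrite etd_sub //; apply: le_trans (vnormD _ _) _.
by rewrite lerD ?vnorm_cexp_col_le ?vnorm_forcing_le.
Qed.

Variables (Rad Lg Lw : R).
Hypotheses (Lg0 : 0 <= Lg) (Lw0 : 0 <= Lw)
  (G_lip : l2_lipschitz_on (ballR Rad) G Lg) (W_lip : l2_lipschitz_on (ballR Rad) W Lw).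

Lemma preact_lipschitz (v w : fld) : ballR Rad v -> ballR Rad w ->
  (l2norm (fsub (preact K lam Mt F ag aw G W dt v) (preact K lam Mt F ag aw G W dt w))
   <= (expR (om * dt) + dt * phi1R (om * dt) * ag * M * Lg + aw * Lw)%:E
      * l2norm (fsub v w))%E.
Proof.
move=> bv bw; set b := dt * phi1R (om * dt) * ag * M.
have b0 : 0 <= b by rewrite !mulr_ge0 ?phi1R_ge0 // ltW.
apply: le_trans (esqrt_esum_le_combination (expR_ge0 _) b0 aw0 _ _ _ _
  (vnorm_preact_sub_le v w)) _; try by move=> k; exact: vnorm2_ge0.
have N0 : (0 <= l2norm (fsub v w))%E by exact: esqrt_ge0.
have bLg0 : 0 <= b * Lg := mulr_ge0 b0 Lg0.
have awLw0 : 0 <= aw * Lw := mulr_ge0 aw0 Lw0.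
rewrite !EFinD !ge0_muleDl ?lee_fin ?addr_ge0 ?expR_ge0 //.
apply: leeD; first apply: leeD => //.
  by rewrite (EFinM b) -muleA lee_wpmul2l ?lee_fin ?G_lip.
by rewrite (EFinM aw) -muleA lee_wpmul2l ?lee_fin ?W_lip.
Qed.

Variables (sig : fld -> fld) (Ls : R).
Hypotheses (Ls0 : 0 <= Ls)
  (sig_lip : l2_lipschitz_on (preact_range K lam Mt F ag aw G W Rad) sig Ls).

Lemma Psi_lipschitz (v w : fld) : ballR Rad v -> ballR Rad w ->
  (l2norm (fsub (Psi K lam Mt F ag aw G W sig dt v) (Psi K lam Mt F ag aw G W sig dt w))
   <= (qfac Ls Lg Lw M ag aw om dt)%:E * l2norm (fsub v w))%E.
Proof.
move=> bv bw; have in_range (u : fld) : ballR Rad u ->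
    preact_range K lam Mt F ag aw G W Rad (preact K lam Mt F ag aw G W dt u).
  by move=> bu; exists dt, u.
apply: le_trans (sig_lip (in_range v bv) (in_range w bw)) _.
by rewrite /qfac EFinM -muleA lee_wpmul2l ?lee_fin // preact_lipschitz.
Qed.

End Block.

Section ContractionFactor.
Variables (R : realType) (Ls Lg Lw M ag aw om dt : R).

Lemma qfac_ge0 : 0 <= Ls -> 0 <= Lg -> 0 <= Lw -> 0 <= M -> 0 <= ag -> 0 <= aw ->
  0 <= dt -> 0 <= qfac Ls Lg Lw M ag aw om dt.
Proof. by move=> *; rewrite mulr_ge0 // !addr_ge0 ?expR_ge0 // !mulr_ge0 ?phi1R_ge0. Qed.

Lemma qfacB_ag ag' : qfac Ls Lg Lw M ag aw om dt - qfac Ls Lg Lw M ag' aw om dt =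
  Ls * dt * phi1R (om * dt) * M * Lg * (ag - ag').
Proof. by rewrite /qfac; ring. Qed.

Lemma qfacB_aw aw' : qfac Ls Lg Lw M ag aw om dt - qfac Ls Lg Lw M ag aw' om dt =
  Ls * Lw * (aw - aw').
Proof. by rewrite /qfac; ring. Qed.

End ContractionFactor.

Theorem corollary5p5 (R : realType) (d nC : nat)
  (K : set (wavevec d))
  (lam : wavevec d -> 'I_nC -> R[i])
  (Mt : wavevec d -> 'M[R[i]]_nC)
  (F : wavevec d -> R)
  (ag aw : R)
  (G W sig : field R d nC -> field R d nC)
  (om Rad Ls Lg Lw M : R) :
  (1 <= d <= 3)%N -> (1 <= nC)%N ->
  (forall k, K k -> 0 <= F k <= 1) ->
  0 <= ag -> 0 <= aw ->
  (* (1) spectral bound *)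
  om <= 0 ->
  (forall k c, K k -> complex.Re (lam k c) <= om) ->
  (* (2) Lipschitz bounds *)
  0 < Rad ->
  0 <= Ls -> 0 <= Lg -> 0 <= Lw -> 0 <= M ->
  l2_lipschitz_on (ballR Rad) G Lg ->
  l2_lipschitz_on (ballR Rad) W Lw ->
  l2_lipschitz_on (preact_range K lam Mt F ag aw G W Rad) sig Ls ->
  (forall k, K k -> specnorm_le (Mt k) M) ->
  (* (a) nonexpansiveness *)
  (forall dt, 0 < dt -> qfac Ls Lg Lw M ag aw om dt <= 1 ->
     forall v w, ballR Rad v -> ballR Rad w ->
     (l2norm (fsub (Psi K lam Mt F ag aw G W sig dt v)
                   (Psi K lam Mt F ag aw G W sig dt w))
        <= l2norm (fsub v w))%E)
  /\
  (* (b) L-fold composition *)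
  (forall (Dt : R) (L : nat), 0 < Dt -> (1 <= L)%N ->
     let dt := Dt / L%:R in
     let Ps := Psi K lam Mt F ag aw G W sig dt in
     forall v w,
       (forall j, (j < L)%N -> ballR Rad (iter j Ps v) /\ ballR Rad (iter j Ps w)) ->
       (l2norm (fsub (iter L Ps v) (iter L Ps w))
          <= ((qfac Ls Lg Lw M ag aw om dt) ^+ L)%:E * l2norm (fsub v w))%E)
  /\
  (* (c) monotonicity of q in alpha_g and alpha_w *)
  (forall dt, 0 < dt ->
     (forall ag', ag' <= ag ->
        qfac Ls Lg Lw M ag' aw om dt <= qfac Ls Lg Lw M ag aw om dt /\
        (ag' < ag -> 0 < Ls * dt * phi1R (om * dt) * M * Lg ->
           qfac Ls Lg Lw M ag' aw om dt < qfac Ls Lg Lw M ag aw om dt))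
     /\
     (forall aw', aw' <= aw ->
        qfac Ls Lg Lw M ag aw' om dt <= qfac Ls Lg Lw M ag aw om dt /\
        (aw' < aw -> 0 < Ls * Lw ->
           qfac Ls Lg Lw M ag aw' om dt < qfac Ls Lg Lw M ag aw om dt))).
Proof.
move=> _ _ F01 ag0 aw0 om0 lam_om _ Ls0 Lg0 Lw0 M0 G_lip W_lip sig_lip Mt_M.
have Psi_lip (dt : R) (dt0 : 0 < dt) := Psi_lipschitz F01 ag0 aw0 lam_om om0 M0 Mt_M dt0
  Lg0 Lw0 G_lip W_lip Ls0 sig_lip.
split; [|split].
- move=> dt dt0 q1 v w bv bw; apply: le_trans (Psi_lip _ dt0 _ _ bv bw) _.
  by rewrite -[leRHS]mul1e lee_wpmul2r ?esqrt_ge0 ?lee_fin.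
- move=> Dt L Dt0 L1 dt Ps v w; have dt0 : 0 < dt by rewrite divr_gt0 // ltr0n.
  by apply: iter_lipschitz_on (Psi_lip _ dt0); rewrite qfac_ge0 // ltW.
- move=> dt dt0; have c_ag : 0 <= Ls * dt * phi1R (om * dt) * M * Lg.
    by rewrite !mulr_ge0 ?phi1R_ge0 // ltW.
  split=> [ag' ag'_le | aw' aw'_le]; rewrite -subr_ge0.
  + rewrite qfacB_ag mulr_ge0 ?subr_ge0 //; split=> // lt_ag c_gt0.
    by rewrite -subr_gt0 qfacB_ag mulr_gt0 ?subr_gt0.
  + rewrite qfacB_aw !mulr_ge0 ?subr_ge0 //; split=> // lt_aw c_gt0.
    by rewrite -subr_gt0 qfacB_aw mulr_gt0 ?subr_gt0.
Qed.
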